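(* For integers $f \geq 1$, $\ell \geq 1$ and $q \geq 1$, let $N_q(f,\ell)$ be the number of numerical semigroups with Frobenius number $f$, multiplicity $\ell+1$, and depth $q$; for $j \geq 1$ let $S(j)$ be the number of numerical semigroups with multiplicity $j+1$ and Frobenius number $3j+2$. Then: (i) $N_2(f,\ell) = 2^{f-2-\ell}$ when $(f-1)/2 \leq \ell \leq f-2$; (ii) $N_3(f,\ell) = 2^{\ell - j} \cdot S(j)$ when $(f-2)/3 \leq \ell \leq (f-3)/2$, where $j = f - 2 - 2\ell$. For all other $\ell$, $N_2(f,\ell) = 0$ and $N_3(f,\ell) = 0$, respectively.
   Context: A numerical semigroup is a subset $\Lambda \subseteq \mathbb{N}_0$ containing $0$, closed under addition, with finite complement. Its multiplicity is $m(\Lambda) = \min(\Lambda \setminus \{0\})$, its conductor $c(\Lambda)$ is the least $c \in \mathbb{N}_0$ with $c + \mathbb{N}_0 \subseteq \Lambda$, its Frobenius number is $c(\Lambda)-1$, and its depth is $\lceil c(\Lambda)/m(\Lambda) \rceil$. *)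

From mathcomp Require Import all_boot.
From mathcomp Require Import boolp.
Set Implicit Arguments. Unset Strict Implicit. Unset Printing Implicit Defensive.

Definition numerical_semigroup (L : nat -> bool) : Prop :=
  [/\ L 0,
      (forall a b, L a -> L b -> L (a + b)) &
      exists c, forall n, c <= n -> L n].

Definition is_conductor (L : nat -> bool) (c : nat) : Prop :=
  (forall n, c <= n -> L n) /\
  (forall c', (forall n, c' <= n -> L n) -> c <= c').

Definition has_frobenius (L : nat -> bool) (f : nat) : Prop :=
  is_conductor L f.+1.

Definition is_multiplicity (L : nat -> bool) (m : nat) : Prop :=
  [/\ 0 < m, L m & forall k, 0 < k -> k < m -> ~~ L k].

Definition ceil_div (c m : nat) : nat := (c + m.-1) %/ m.

Definition has_depth (L : nat -> bool) (q : nat) : Prop :=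
  exists c m, [/\ is_conductor L c, is_multiplicity L m & q = ceil_div c m].

(* Every numerical semigroup with Frobenius number f contains every n > f,
   hence is determined by its trace A on {0,...,f}; conversely such a trace A
   gives the candidate set  embed f A = A u {n | n > f}. *)
Definition embed (f : nat) (A : {set 'I_f.+1}) : nat -> bool :=
  fun n => (f < n) || [exists i : 'I_f.+1, (i \in A) && (nat_of_ord i == n)].

Definition Nq (q f l : nat) : nat :=
  #|[set A : {set 'I_f.+1} |
      `[< numerical_semigroup (embed A) /\ has_frobenius (embed A) f /\
          is_multiplicity (embed A) l.+1 /\ has_depth (embed A) q >]]|.

Definition S (j : nat) : nat :=
  #|[set A : {set 'I_(3 * j + 2).+1} |
      `[< numerical_semigroup (embed A) /\ has_frobenius (embed A) (3 * j + 2) /\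
          is_multiplicity (embed A) j.+1 >]]|.

From mathcomp Require Import all_boot.
From mathcomp Require Import boolp zify.

(* A numerical semigroup with Frobenius number f contains every n > f, so it
   is determined by its trace on [0, f]; with multiplicity m the trace must
   contain 0 and m, avoid (0, m) and f, and be closed under the sums a + b <= f
   of its elements a, b >= m.  Depth 2 means m <= f < 2m and depth 3 means
   2m <= f < 3m, where f = m and f = 2m are excluded since m and 2m belong to
   the semigroup.
   For m < f < 2m there are no such sums, so the elements of (m, f) are free.
   For f = 2m + j with j < m, the elements of (j, m) are excluded, those of
   (m + j, 2m) are free (they are neither summands nor sums), and the blocks
   [0, j], [m, m + j], [2m, 2m + j] interact exactly like the blocks [0, j],
   [j + 1, 2j + 1], [2j + 2, 3j + 2] of a semigroup with multiplicity j + 1 and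
   Frobenius number 3j + 2. *)

Section Decomposition.
Variables (T U : finType) (h : U -> T) (F D : {set T}).
Variables (P : {set T} -> Prop) (Q : {set U} -> Prop).
Hypotheses (h_inj : injective h) (disj_F_h : [disjoint F & codom h]).
Hypotheses (disj_D_F : [disjoint D & F]) (disj_D_h : [disjoint D & codom h]).
Hypothesis PQ : forall A : {set T}, P A <->
  Q (h @^-1: A) /\ (forall i, i \notin F -> i \notin codom h -> (i \in A) = (i \in D)).

Let split_set (A : {set T}) := (h @^-1: A, A :&: F).
Let glue (p : {set U} * {set T}) := h @: p.1 :|: p.2 :|: D.

Let notin_F_h u : (h u \in F) = false.
Proof. exact: disjointFl disj_F_h (codom_f h u). Qed.

Let notin_D_h u : (h u \in D) = false.
Proof. exact: disjointFl disj_D_h (codom_f h u). Qed.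

Let imset_codom (B : {set U}) i : i \in h @: B -> i \in codom h.
Proof. by case/imsetP=> u _ ->; apply: codom_f. Qed.

Let glueK (B : {set U}) (C : {set T}) :
  C \subset F -> split_set (glue (B, C)) = (B, C).
Proof.
move=> CF; have notin_C_h u : (h u \in C) = false.
  exact: contraFF (subsetP CF (h u)) (notin_F_h u).
congr pair; apply/setP => x; rewrite !inE /=.
  by rewrite mem_imset // notin_C_h notin_D_h !orbF.
case: (boolP (x \in F)) => Fx; last by rewrite andbF (contraNF (subsetP CF x) Fx).
rewrite (contraFF (@imset_codom B x)) ?(disjointFl disj_D_F) ?orbF ?andbT //.
exact: disjointFr disj_F_h Fx.
Qed.

Let split_setK : {in [set A : {set T} | `[< P A >]], cancel split_set glue}.
Proof.
move=> A; rewrite inE => /asboolP /PQ [_ forced]; apply/setP => i; rewrite !inE /=.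
case: (boolP (i \in codom h)) => [/codomP [u ->]|hi].
  by rewrite mem_imset // inE notin_F_h notin_D_h andbF !orbF.
rewrite (contraNF (@imset_codom _ i) hi) /=.
case: (boolP (i \in F)) => Fi; first by rewrite (disjointFl disj_D_F) // andbT orbF.
by rewrite andbF forced.
Qed.

Lemma card_decompose :
  #|[set A | `[< P A >]]| = #|[set B | `[< Q B >]]| * 2 ^ #|F|.
Proof.
rewrite -card_powerset -cardsX -(card_in_imset (can_in_inj split_setK)).
apply: eq_card => -[B C]; rewrite !inE /=; apply/imsetP/andP.
  move=> [A]; rewrite inE => /asboolP /PQ [QA _] [-> ->].
  by split; [apply/asboolP | apply: subsetIr].
move=> [/asboolP QB CF]; exists (glue (B, C)); last by rewrite glueK.
rewrite inE; apply/asboolP/PQ; split; first by have [-> _] := glueK B C CF.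
move=> i Fi hi; rewrite /glue !inE (contraNF (subsetP CF i) Fi).
by rewrite (contraNF (@imset_codom _ i) hi).
Qed.

End Decomposition.
Arguments card_decompose {T U} h {F D P Q}.

Lemma card_free_sets (T : finType) (F D : {set T}) (P : {set T} -> Prop) :
  [disjoint D & F] ->
  (forall A, P A <-> forall i, i \notin F -> (i \in A) = (i \in D)) ->
  #|[set A | `[< P A >]]| = 2 ^ #|F|.
Proof.
move=> disj_D_F PD; have no_codom i : i \notin codom (@of_void T).
  by apply/codomP => -[[]].
have disj_void (A : {set T}) : [disjoint A & codom (@of_void T)].
  by apply/pred0P => i /=; rewrite (negbTE (no_codom i)) andbF.
rewrite (card_decompose (@of_void T) (F := F) (D := D) (P := P)
  (Q := fun _ => True)) //.
- have -> : #|[set B : {set void} | `[< True >]]| = 1.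
    rewrite -(cards1 (@set0 void)); apply: eq_card => B.
    have -> : B = set0 by apply/setP => -[].
    by rewrite !inE eqxx asboolT.
  by rewrite mul1n.
- move=> A; split => [/PD forced | [_ forced]].
    by split => // i Fi _; apply: forced.
  by apply/PD => i Fi; apply: forced.
Qed.

Lemma card_ord_lt {n k} : k <= n -> #|[set i : 'I_n | i < k]| = k.
Proof.
move=> kn; have widen_inj : injective (widen_ord kn).
  by move=> i i' /(congr1 val) => /= ?; exact: val_inj.
rewrite -[RHS]card_ord -(card_imset _ widen_inj).
apply: eq_card => i; rewrite inE.
apply/idP/imsetP => [i_lt_k | [i' _ ->]]; last exact: (ltn_ord i').
by exists (Ordinal i_lt_k) => //; apply: val_inj.
Qed.

Lemma card_ord_interval n a b :
  a <= b <= n -> #|[set i : 'I_n | a <= i < b]| = b - a.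
Proof.
case/andP=> ab bn; have sub : [set i : 'I_n | i < a] \subset [set i : 'I_n | i < b].
  by apply/subsetP => i; rewrite !inE => /leq_trans; apply.
have -> : [set i : 'I_n | a <= i < b] =
          [set i : 'I_n | i < b] :\: [set i : 'I_n | i < a].
  by apply/setP => i; rewrite !inE -leqNgt andbC.
by rewrite cardsD (setIidPr sub) !card_ord_lt // (leq_trans ab bn).
Qed.

Lemma eq_ceil_div c m q :
  0 < m -> (ceil_div c m == q) = (q * m <= c + m.-1 < q.+1 * m).
Proof.
by move=> m_gt0; rewrite /ceil_div eq_sym eqn_leq leq_divRL // -(ltnS _ q) ltn_divLR.
Qed.

Lemma is_conductor_uniq {L : nat -> bool} {c1 c2 : nat} :
  is_conductor L c1 -> is_conductor L c2 -> c1 = c2.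
Proof. by move=> [L1 least1] [L2 least2]; apply/eqP; rewrite eqn_leq least1 ?least2. Qed.

Lemma is_multiplicity_uniq {L : nat -> bool} {m1 m2 : nat} :
  is_multiplicity L m1 -> is_multiplicity L m2 -> m1 = m2.
Proof.
move=> [m1_gt0 Lm1 gap1] [m2_gt0 Lm2 gap2].
case: (ltngtP m1 m2) => [/(gap2 _ m1_gt0) | /(gap1 _ m2_gt0) | //].
  by rewrite Lm1.
by rewrite Lm2.
Qed.

Lemma has_depth_ceil {L : nat -> bool} {f m : nat} (q : nat) :
  has_frobenius L f -> is_multiplicity L m ->
  has_depth L q <-> ceil_div f.+1 m = q.
Proof.
move=> Lf Lm; split => [[c [m' [Lc Lm' ->]]]|<-]; last by exists f.+1, m.
by rewrite (is_conductor_uniq Lc Lf) (is_multiplicity_uniq Lm' Lm).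
Qed.

Definition semigroup_trace (m f : nat) (L : nat -> bool) : Prop :=
  [/\ L 0, forall i, 0 < i < m -> ~~ L i, L m, ~~ L f &
      forall a b, m <= a -> m <= b -> a + b <= f -> L a -> L b -> L (a + b)].

Lemma semigroup_traceP {L : nat -> bool} {m f : nat} :
  0 < m -> (forall n, f < n -> L n) ->
  numerical_semigroup L /\ has_frobenius L f /\ is_multiplicity L m <->
  semigroup_trace m f L.
Proof.
move=> m_gt0 L_gt_f; split.
- case=> [[L0 addL _] [[_ least] [_ Lm gap]]]; split => //.
  + by move=> i /andP[]; apply: gap.
  + apply/negP => Lf; suff: f.+1 <= f by rewrite ltnn.
    by apply: least => n; rewrite leq_eqVlt => /predU1P [<-|/L_gt_f].
  + by move=> a b _ _ _; apply: addL.
- case=> L0 gap Lm Lf addL.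
  have ge_m a : 0 < a -> L a -> m <= a.
    move=> a_gt0 La; rewrite leqNgt; apply: contraL La => a_lt_m.
    by apply: gap; rewrite a_gt0.
  split; [split => // | split].
  + move=> a b La Lb; have [->|a_gt0] := posnP a; first by [].
    have [->|b_gt0] := posnP b; first by rewrite addn0.
    have [ab_le_f|/L_gt_f //] := leqP (a + b) f.
    exact: addL (ge_m _ a_gt0 La) (ge_m _ b_gt0 Lb) ab_le_f La Lb.
  + by exists f.+1.
  + by split => // c L_ge_c; rewrite ltnNge; apply: contra Lf => /L_ge_c.
  + by split => // k k_gt0 k_lt_m; apply: gap; rewrite k_gt0.
Qed.

Lemma semigroup_trace_frob {m f : nat} {L : nat -> bool} :
  semigroup_trace m f L -> (f != m) && (f != m.*2).
Proof.
case=> _ _ Lm Lf addL; apply/andP; split; apply: contraNneq Lf => f_eq.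
  by rewrite f_eq.
by rewrite f_eq -addnn addL // addnn -f_eq.
Qed.

Section Embed.
Variables (f : nat) (A : {set 'I_f.+1}).

Lemma embed_gt n : f < n -> embed A n.
Proof. by rewrite /embed => ->. Qed.

Lemma embed_ord (i : 'I_f.+1) : embed A i = (i \in A).
Proof.
rewrite /embed ltnNge -ltnS ltn_ord /=.
apply/existsP/idP => [[i' /andP[Ai' /eqP/val_inj <-]] // | Ai].
by exists i; rewrite Ai eqxx.
Qed.

Lemma embed_le n : n <= f -> embed A n = (inord n \in A).
Proof. by move=> n_le_f; rewrite -embed_ord inordK. Qed.

End Embed.

Definition ntraces (m f : nat) : nat :=
  #|[set A : {set 'I_f.+1} | `[< semigroup_trace m f (embed A) >]]|.

Lemma Nq_traces q f l :
  Nq q f l = if ceil_div f.+1 l.+1 == q then ntraces l.+1 f else 0.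
Proof.
have traceP A := semigroup_traceP (ltn0Sn l) (embed_gt _ A).
rewrite /Nq /ntraces; case: eqP => [depth | depth].
  apply: eq_card => A; rewrite !inE; apply: asbool_equiv_eq; rewrite -traceP.
  split => [[? [? [? _]]] // | [? [Lf Lm]]].
  by do 3 split => //; apply/(has_depth_ceil _ Lf Lm).
apply/eqP; rewrite cards_eq0; apply/eqP/setP => A; rewrite !inE.
by apply/negbTE/asboolPn => -[_ [Lf [Lm /(has_depth_ceil _ Lf Lm)]]].
Qed.

Lemma S_traces j : S j = ntraces j.+1 (3 * j + 2).
Proof.
apply: eq_card => A; rewrite !inE; apply: asbool_equiv_eq.
exact: semigroup_traceP (ltn0Sn j) (embed_gt _ A).
Qed.

Lemma ntraces_eq0 m f : (f == m) || (f == m.*2) -> ntraces m f = 0.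
Proof.
move=> f_eq; apply/eqP; rewrite cards_eq0; apply/eqP/setP => A; rewrite !inE.
by apply/negbTE/asboolPn => /semigroup_trace_frob; rewrite -negb_or f_eq.
Qed.

Lemma semigroup_trace_depth2 {m f : nat} {L : nat -> bool} : m < f < m.*2 ->
  semigroup_trace m f L <->
  forall n, n <= f -> ~~ (m < n < f) -> L n = (n == 0) || (n == m).
Proof.
case/andP=> m_lt_f f_lt_2m; split.
- case=> L0 gap Lm Lf _ n n_le_f n_fixed.
  have [->|n_gt0] := posnP n; first by rewrite L0.
  case: (ltngtP n m) => [n_lt_m | n_gt_m | ->]; last by rewrite Lm orbT.
    by rewrite (negbTE (gap n _)) ?n_gt0 //; lia.
  have -> : n = f by lia.
  by rewrite (negbTE Lf); lia.
- move=> fixed; split.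
  + by rewrite fixed.
  + by move=> i i_gap; rewrite fixed; lia.
  + by rewrite fixed ?eqxx ?orbT //; lia.
  + by rewrite fixed //; lia.
  + by move=> a b *; lia.
Qed.

Lemma ntraces_depth2 m f : m < f < m.*2 -> ntraces m f = 2 ^ (f - m.+1).
Proof.
move=> f_range; rewrite -(card_ord_interval f.+1 m.+1 f); last lia.
apply: (@card_free_sets _ _ [set i : 'I_f.+1 | (i == 0 :> nat) || (i == m :> nat)]).
  by apply/pred0P => i /=; rewrite !inE; lia.
move=> A; apply: iff_trans (semigroup_trace_depth2 f_range) _.
split => [fixed i | fixed n n_le_f n_free].
  by rewrite !inE -embed_ord => i_free; apply: fixed => //; rewrite -ltnS.
by rewrite embed_le // fixed !inE ?inordK //; lia.
Qed.

Lemma closed_depth3 m j L :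
  (forall a b, m <= a -> m <= b -> a + b <= m.*2 + j -> L a -> L b -> L (a + b)) <->
  (forall x y, x + y <= j -> L (m + x) -> L (m + y) -> L (m.*2 + (x + y))).
Proof.
split=> [addL x y xy Lx Ly | addL a b a_ge b_ge ab_le La Lb].
  by rewrite -addnn addnACA; apply: addL; rewrite ?leq_addr //; lia.
have -> : a + b = m.*2 + ((a - m) + (b - m)) by lia.
by apply: addL; rewrite ?subnKC //; lia.
Qed.

Section Depth3.
Variables m j : nat.
Hypothesis j_lt_m : j < m.

Definition stretch n :=
  if n <= j then n else if n <= j.*2.+1 then n + (m - j.+1) else n + (m - j.+1).*2.

Lemma stretch_cases n :
  [\/ n <= j /\ stretch n = n, j < n <= j.*2.+1 /\ stretch n = n + (m - j.+1)
    | j.*2.+1 < n /\ stretch n = n + (m - j.+1).*2].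
Proof.
rewrite /stretch; case: (leqP n j) => [|n_gt_j]; first by constructor 1.
by case: (leqP n j.*2.+1) => n_le; [constructor 2 | constructor 3].
Qed.

Lemma stretch_small x : x <= j -> stretch x = x.
Proof. by case: (stretch_cases x) => -[]; lia. Qed.

Lemma stretch_mid x : x <= j -> stretch (j.+1 + x) = m + x.
Proof. by case: (stretch_cases (j.+1 + x)) => -[]; lia. Qed.

Lemma stretch_top x : x <= j -> stretch (j.+1.*2 + x) = m.*2 + x.
Proof. by case: (stretch_cases (j.+1.*2 + x)) => -[]; lia. Qed.

Lemma semigroup_trace_stretch {L L' : nat -> bool} :
  (forall n, n <= 3 * j + 2 -> L' n = L (stretch n)) ->
  semigroup_trace m (m.*2 + j) L <->
  semigroup_trace j.+1 (3 * j + 2) L' /\ (forall i, j < i < m -> ~~ L i).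
Proof.
move=> L'E.
have smallE x : x <= j -> L' x = L x by move=> x_le; rewrite L'E ?stretch_small //; lia.
have midE x : x <= j -> L' (j.+1 + x) = L (m + x).
  by move=> x_le; rewrite L'E ?stretch_mid //; lia.
have topE x : x <= j -> L' (j.+1.*2 + x) = L (m.*2 + x).
  by move=> x_le; rewrite L'E ?stretch_top //; lia.
have -> : 3 * j + 2 = j.+1.*2 + j by lia.
split.
- case=> L0 gap Lm Lf /closed_depth3 addL; split; last by move=> i ? ; apply: gap; lia.
  split.
  + by rewrite smallE.
  + by move=> i i_gap; rewrite smallE; [apply: gap | ]; lia.
  + by rewrite -[j.+1]addn0 midE // addn0.
  + by rewrite topE.
  + by apply/closed_depth3 => x y xy; rewrite !midE ?topE; [exact: addL | lia..].
- case=> -[L0 gap Lm Lf /closed_depth3 addL] gap_mid; split.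
  + by rewrite -smallE.
  + move=> i /andP [i_gt0 i_lt_m]; have [i_le_j | i_gt_j] := leqP i j.
      by rewrite -smallE // gap // i_gt0.
    by apply: gap_mid; rewrite i_gt_j.
  + by rewrite -[m]addn0 -midE // addn0.
  + by rewrite -topE.
  + by apply/closed_depth3 => x y xy; rewrite -!midE -?topE; [exact: addL | lia..].
Qed.

Lemma stretch_lt {n : nat} : n < (3 * j + 2).+1 -> stretch n < (m.*2 + j).+1.
Proof. by case: (stretch_cases n) => -[_ ->]; lia. Qed.

Definition stretch_ord (i : 'I_(3 * j + 2).+1) : 'I_(m.*2 + j).+1 :=
  Ordinal (stretch_lt (ltn_ord i)).

Lemma stretch_ord_inj : injective stretch_ord.
Proof.
move=> i i' /(congr1 val) /= eq_stretch; apply: ord_inj; move: eq_stretch.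
by case: (stretch_cases i) => -[? ->]; case: (stretch_cases i') => -[? ->]; lia.
Qed.

Lemma codom_stretch_ord (i : 'I_(m.*2 + j).+1) :
  (i \in codom stretch_ord) = ~~ (j < i < m) && ~~ (m + j < i < m.*2).
Proof.
apply/codomP/idP => [[k ->] /= | i_img].
  by move: (ltn_ord k); case: (stretch_cases k) => -[? ->]; lia.
have i_le := ltn_ord i; have [i_le_j | i_gt_j] := leqP i j.
  by exists (inord i); apply: ord_inj; rewrite /= inordK ?stretch_small //; lia.
have [i_le_mj | i_gt_mj] := leqP i (m + j).
  exists (inord (j.+1 + (i - m))); apply: ord_inj.
  by rewrite /= inordK ?stretch_mid; lia.
exists (inord (j.+1.*2 + (i - m.*2))); apply: ord_inj.
by rewrite /= inordK ?stretch_top; lia.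
Qed.

Lemma embed_stretch (A : {set 'I_(m.*2 + j).+1}) n :
  n <= 3 * j + 2 -> embed (stretch_ord @^-1: A) n = embed A (stretch n).
Proof. by move=> n_le; rewrite embed_le // inE -embed_ord /= inordK. Qed.

Lemma ntraces_depth3 :
  ntraces m (m.*2 + j) = ntraces j.+1 (3 * j + 2) * 2 ^ (m - j.+1).
Proof.
have card_F : #|[set i : 'I_(m.*2 + j).+1 | m + j < i < m.*2]| = m - j.+1.
  by rewrite card_ord_interval; lia.
rewrite -card_F /ntraces; apply: (card_decompose stretch_ord (D := set0)).
- exact: stretch_ord_inj.
- by apply/pred0P => i /=; rewrite inE codom_stretch_ord; lia.
- by apply: eq_disjoint0 => i; rewrite inE.
- by apply: eq_disjoint0 => i; rewrite inE.
- move=> A; apply: iff_trans (semigroup_trace_stretch (embed_stretch A)) _.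
  apply: and_iff_compat_l; split => [gap_mid i i_F i_img | forced i i_mid].
    rewrite in_set0 -embed_ord; apply/negbTE/gap_mid.
    by move: i_F i_img; rewrite inE codom_stretch_ord; lia.
  rewrite embed_le; last lia.
  by rewrite forced ?in_set0 // ?inE ?codom_stretch_ord inordK; lia.
Qed.

End Depth3.

Theorem proposition2p10 (f l : nat) (hf : 1 <= f) (hl : 1 <= l) :
  ((f - 1 <= 2 * l /\ l <= f - 2) -> Nq 2 f l = 2 ^ (f - 2 - l)) /\
  (~ (f - 1 <= 2 * l /\ l <= f - 2) -> Nq 2 f l = 0) /\
  ((f - 2 <= 3 * l /\ 2 * l <= f - 3) ->
     Nq 3 f l = 2 ^ (l - (f - 2 - 2 * l)) * S (f - 2 - 2 * l)) /\
  (~ (f - 2 <= 3 * l /\ 2 * l <= f - 3) -> Nq 3 f l = 0).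
Proof.
rewrite !Nq_traces !eq_ceil_div //=.
split; [|split; [|split]] => range.
- rewrite ifT; last lia.
  by rewrite ntraces_depth2; [congr (2 ^ _) | ]; lia.
- by case: ifP => // depth; apply: ntraces_eq0; lia.
- set j := f - 2 - 2 * l; have j_lt_m : j < l.+1 by rewrite /j; lia.
  have f_eq : f = l.+1.*2 + j by rewrite /j; lia.
  rewrite ifT; last lia.
  by rewrite f_eq ntraces_depth3 // -S_traces mulnC subSS.
- by case: ifP => // depth; apply: ntraces_eq0; lia.
Qed.
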